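(* Let $p\ge5$ be a prime with Legendre symbol $\left(\frac{-3}{p}\right)=-1$. Then for all integers $n,k\ge0$ with $p\nmid n$, $$b\!\left(3p^{2k+1}n+\frac{p^{2k+2}-1}{2}\right)\equiv 0\pmod 2.$$
   Context: The mock theta function $\mathcal{B}(q)=\sum_{n\ge0}\frac{q^n(-q;q^2)_n}{(q;q^2)_{n+1}}=\sum_{n\ge0}b(n)q^n$, where $(a;q)_n=\prod_{j=0}^{n-1}(1-aq^j)$. *)

From mathcomp Require Import all_boot all_algebra.
Set Implicit Arguments. Unset Strict Implicit. Unset Printing Implicit Defensive.
Import GRing.Theory Num.Theory.
Local Open Scope ring_scope.

(* Truncation of 1/(1 - q^m) modulo q^(N+1):  sum_{i=0}^{N} q^(m i). *)
Definition geom_trunc (m N : nat) : {poly int} :=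
  \sum_(i < N.+1) 'X^(m * i).

Definition negq_poch (n : nat) : {poly int} :=
  \prod_(j < n) (1 + 'X^(2 * j + 1)).

(* Truncation of 1/(q;q^2)_{n+1} = prod_{j<=n} 1/(1 - q^(2j+1)) modulo q^(N+1). *)
Definition inv_q_poch_trunc (n N : nat) : {poly int} :=
  \prod_(j < n.+1) geom_trunc (2 * j + 1) N.

(* b(N) = coefficient of q^N in
   B(q) = sum_{n>=0} q^n (-q;q^2)_n / (q;q^2)_{n+1}.
   Terms with n > N start at degree > N, and every truncation used is exact
   modulo q^(N+1), so this coefficient equals the true one. *)
Definition b (N : nat) : int :=
  (\sum_(n < N.+1) 'X^n * negq_poch n * inv_q_poch_trunc n N)`_N.

Definition legendre (a : int) (p : nat) : int :=
  if (p%:Z %| a)%Z then 0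
  else if [exists x : 'I_p, (p%:Z %| (x%:Z ^+ 2 - a))%Z] then 1 else -1.

From mathcomp Require Import all_boot all_algebra ring zify.
Import GRing.Theory Num.Theory.
Local Open Scope ring_scope.

(* Modulo 2 the numerator (-q;q^2)_n cancels all of (q;q^2)_{n+1} except the
   factor 1 - q^(2n+1), so B(q) = sum_n q^n / (1 - q^(2n+1)) (mod 2) and b(N) is
   congruent to the number of pairs (n, i) with n + (2n+1) i = N, that is, of
   factorisations 2N+1 = (2n+1)(2i+1).  Swapping the factors pairs these up,
   so b(N) is odd exactly when 2N+1 is a square.  For the N of the theorem,
   2N+1 = p^(2k+1) (6n+p) with p not dividing 6n+p, which is not a square
   because its p-adic valuation is odd. *)

Definition geom_truncR (R : nzRingType) (m N : nat) : {poly R} :=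
  \sum_(i < N.+1) 'X^(m * i).

Definition Bpoly (R : nzRingType) (N : nat) : {poly R} :=
  \sum_(n < N.+1) 'X^n * (\prod_(j < n) (1 + 'X^(2 * j + 1)))
     * \prod_(j < n.+1) geom_truncR R (2 * j + 1) N.

Lemma b_Bpoly N : b N = (Bpoly int N)`_N.
Proof. by []. Qed.

Lemma map_Bpoly (R S : nzRingType) (f : {rmorphism R -> S}) N :
  map_poly f (Bpoly R N) = Bpoly S N.
Proof.
rewrite rmorph_sum; apply: eq_bigr => n _.
rewrite !rmorphM /= map_polyXn !rmorph_prod; congr (_ * _ * _).
  by apply: eq_bigr => j _; rewrite rmorphD rmorph1 /= map_polyXn.
apply: eq_bigr => j _; rewrite rmorph_sum; apply: eq_bigr => i _.
by rewrite /= map_polyXn.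
Qed.

Lemma mul_geom_truncR (R : comNzRingType) m N :
  (1 - 'X^m) * geom_truncR R m N = 1 - 'X^(m * N.+1).
Proof.
rewrite /geom_truncR; elim: N => [|N IH].
  by rewrite big_ord1 muln0 expr0 mulr1 muln1.
by rewrite big_ord_recr /= mulrDr IH (mulnS m N.+1) exprD; ring.
Qed.

Lemma prod_1DM {R : comNzRingType} (c : R) {I : Type} (s : seq I) (a : I -> R) :
  exists r, \prod_(i <- s) (1 + c * a i) = 1 + c * r.
Proof.
elim: s => [|i s [r IH]]; first by exists 0; rewrite big_nil mulr0 addr0.
by exists (a i + r + c * a i * r); rewrite big_cons IH; ring.
Qed.

Section CharTwo.

Variable R : comNzRingType.
Hypothesis pcharR2 : 2 \in [pchar R].

Let pchar_polyR2 : 2 \in [pchar {poly R}].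
Proof. by rewrite pchar_poly. Qed.

Lemma Bpoly_term_coef_pchar2 N n :
  ('X^n * (\prod_(j < n) (1 + 'X^(2 * j + 1)))
     * \prod_(j < n.+1) geom_truncR R (2 * j + 1) N)`_N
  = \sum_(i < N.+1) ((N == n + (2 * n + 1) * i)%N)%:R.
Proof.
set G := geom_truncR R.
have factor_mod (j : nat) : (1 + 'X^(2 * j + 1)) * G (2 * j + 1)%N N
    = 1 + 'X^(N.+1) * 'X^(2 * j * N.+1).
  rewrite -GRing.subr_pchar2 // mul_geom_truncR GRing.subr_pchar2 // -exprD.
  by congr (1 + 'X^_); rewrite mulnDl mul1n addnC.
have [r Er] := prod_1DM ('X^(N.+1) : {poly R}) (index_enum 'I_n)
  (fun j : 'I_n => 'X^(2 * j * N.+1)).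
have -> : 'X^n * (\prod_(j < n) (1 + 'X^(2 * j + 1))) * \prod_(j < n.+1) G (2 * j + 1)%N N
    = 'X^n * G (2 * n + 1)%N N + 'X^(n + N.+1) * (G (2 * n + 1)%N N * r).
  rewrite big_ord_recr /= mulrA (mulrC _ (G _ N)) -!mulrA -big_split /=.
  under eq_bigr do rewrite factor_mod.
  by rewrite Er exprD; ring.
rewrite coefD [X in _ + X]coefXnM ltn_addl // addr0.
rewrite mulr_sumr coef_sum; apply: eq_bigr => i _.
by rewrite -exprD coefXn.
Qed.

End CharTwo.

Lemma natr_Z2 n : (n%:R : 'Z_2) = (odd n)%:R.
Proof. by rewrite -(Zp_nat_mod (p := 2)) // modn2. Qed.

Lemma intr_Z2_eq0 (z : int) : ((z%:~R : 'Z_2) == 0) = (2 %| z)%Z.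
Proof.
rewrite [z in LHS]intEsign rmorphM rmorph_sign /= mulr_sign.
by case: (z < 0); rewrite ?oppr_eq0 -pmulrn natr_Z2 dvdzE dvdn2; case: odd.
Qed.

Lemma odd_sum_sym m (F : 'I_m -> 'I_m -> nat) : (forall i j, F i j = F j i) ->
  odd (\sum_(i < m) \sum_(j < m) F i j) = odd (\sum_(i < m) F i i).
Proof.
move=> Fsym; set U := (\sum_(i < m) \sum_(j < m) (i < j) * F i j)%N.
have split_ij : (\sum_(i < m) \sum_(j < m) F i j
    = U + \sum_(i < m) F i i + \sum_(i < m) \sum_(j < m) (j < i) * F i j)%N.
  rewrite -big_split -big_split /=; apply: eq_bigr => i _.
  rewrite addnAC -big_split /= [in LHS](bigD1 i) //= [in RHS](bigD1 i) //=.
  rewrite ltnn mul0n add0n addnC; congr (_ + _)%N.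
  apply: eq_bigr => j nji; case: ltngtP => [||/ord_inj eji]; rewrite ?mul1n ?mul0n ?addn0 //.
  by rewrite eji eqxx in nji.
rewrite split_ij; have -> : (\sum_(i < m) \sum_(j < m) (j < i) * F i j = U)%N.
  by rewrite exchange_big; apply: eq_bigr => i _; apply: eq_bigr => j _; rewrite Fsym.
by rewrite addnAC oddD addnn odd_double.
Qed.

Lemma addn_mul_odd_eq n i N :
  (N == n + (2 * n + 1) * i)%N = ((2 * n + 1) * (2 * i + 1) == 2 * N + 1)%N.
Proof. by apply/eqP/eqP; nia. Qed.

Lemma b_Z2 N : ((b N)%:~R : 'Z_2)
  = (\sum_(n < N.+1) \sum_(i < N.+1) ((2 * n + 1) * (2 * i + 1) == 2 * N + 1))%:R.
Proof.
have pcharZ2 : 2 \in [pchar 'Z_2] by apply/andP; split; last exact/eqP/pchar_Zp.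
rewrite b_Bpoly -coef_map map_Bpoly coef_sum natr_sum; apply: eq_bigr => n _.
rewrite Bpoly_term_coef_pchar2 // natr_sum; apply: eq_bigr => i _.
by rewrite addn_mul_odd_eq.
Qed.

Lemma b_even_of_nonsquare N : (forall a, a * a != 2 * N + 1)%N -> (2 %| b N)%Z.
Proof.
move=> nonsquare; rewrite -intr_Z2_eq0 b_Z2 natr_Z2 odd_sum_sym => [|i j]; last first.
  by rewrite mulnC.
by rewrite big1 // => i _; rewrite (negbTE (nonsquare _)).
Qed.

Lemma logn_expnM p e u : prime p -> ~~ (p %| u)%N -> logn p (p ^ e * u) = e.
Proof.
move=> pp pNu; have u_gt0 : (0 < u)%N by case: u pNu; rewrite ?dvdn0.
rewrite lognM ?expn_gt0 ?(prime_gt0 pp) // pfactorK // logn_coprime ?addn0 //.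
by rewrite prime_coprime.
Qed.

Lemma square_neq_of_odd_logn p a m : odd (logn p m) -> (a * a != m)%N.
Proof. by apply: contraL => /eqP <-; rewrite mulnn lognX oddM. Qed.

Lemma theorem1p4_index_double p k n : odd p ->
  (2 * (3 * p ^ (2 * k + 1) * n + (p ^ (2 * k + 2) - 1) %/ 2) + 1
    = p ^ (2 * k + 1) * (6 * n + p))%N.
Proof.
move=> odd_p; rewrite (_ : 2 * k + 2 = (2 * k + 1).+1)%N ?expnSr; last by rewrite addnS.
have := divn_eq (p ^ (2 * k + 1) * p)%N 2.
rewrite modn2 oddM oddX odd_p orbT; move: (p ^ (2 * k + 1))%N => q.
nia.
Qed.

Theorem theorem1p4 (p : nat) :
  prime p -> (5 <= p)%N -> legendre (-3) p = -1 ->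
  forall n k : nat, ~~ (p %| n)%N ->
    (2 %| b (3 * p ^ (2 * k + 1) * n + (p ^ (2 * k + 2) - 1) %/ 2)%N)%Z.
Proof.
move=> pp p_ge5 _ n k pNn.
have odd_p : odd p by case: (even_prime pp) => // p2; rewrite p2 in p_ge5.
have pN6 : ~~ (p %| 2 * 3)%N.
  by rewrite Euclid_dvdM // negb_or; apply/andP; split; apply/negP => /dvdn_leq; lia.
apply: b_even_of_nonsquare => a; rewrite theorem1p4_index_double //.
apply: (square_neq_of_odd_logn p); rewrite logn_expnM //; first by rewrite oddD oddM.
by rewrite dvdn_addl // Euclid_dvdM // negb_or pNn andbT.
Qed.
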